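(* For every LCNF formula $\Phi$ and any two labelled clauses $C_1^{L_1}, C_2^{L_2} \in \Phi$, $\mathsf{MCS}(\mathsf{sub}(\Phi, C_1^{L_1}, C_2^{L_2})) = \mathsf{MCS}(\Phi)$.
   Context: Fix a countable set $Lbls$ of labels. A labelled clause $C^L$ is a pair of a clause $C$ (a finite set of literals) and a finite set $L \subseteq Lbls$. An LCNF formula $\Phi$ is a finite set of labelled clauses; $Cls(\Phi) = \{C : C^L \in \Phi\}$ and $Lbls(\Phi) = \bigcup_{C^L\in\Phi} L$. $\Phi$ is satisfiable iff $Cls(\Phi)$ is. For $M \subseteq Lbls(\Phi)$, the induced subformula is $\Phi|_M = \{C^L \in \Phi : L \subseteq M\}$. A set $R \subseteq Lbls(\Phi)$ is an MCS of $\Phi$ if (i) $\Phi|_{Lbls(\Phi)\setminus R}$ is satisfiable and (ii) for every $l \in R$, $\Phi|_{(Lbls(\Phi)\setminus R)\cup\{l\}}$ is unsatisfiable; $\mathsf{MCS}(\Phi)$ is the set of all MCSes of $\Phi$. A labelled clause $C_1^{L_1}$ subsumes $C_2^{L_2}$, written $C_1^{L_1} \subset C_2^{L_2}$, if $C_1 \subset C_2$ and $L_1 \subseteq L_2$. Define $\mathsf{sub}(\Phi, C_1^{L_1}, C_2^{L_2}) = \Phi \setminus \{C_2^{L_2}\}$ if $C_1^{L_1} \subset C_2^{L_2}$, and $\mathsf{sub}(\Phi, C_1^{L_1}, C_2^{L_2}) = \Phi$ otherwise. *)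

From HB Require Import structures.
From mathcomp Require Import all_boot finmap.
Set Implicit Arguments. Unset Strict Implicit. Unset Printing Implicit Defensive.
Local Open Scope fset_scope.

Section LCNF.
Variables (V Lbl : countType).

(* A literal is a variable with a polarity (true = positive). *)
Definition lit := (V * bool)%type.
Definition clause := {fset lit}.
Definition lclause := (clause * {fset Lbl})%type.
Definition lcnf := {fset lclause}.

Definition sat_lit (a : V -> bool) (x : lit) : bool := a x.1 == x.2.
Definition sat_clause (a : V -> bool) (C : clause) : bool :=
  [exists x : C, sat_lit a (val x)].

Definition satisfiable (Phi : lcnf) : Prop :=
  exists a : V -> bool, forall c, c \in Phi -> sat_clause a c.1.

Definition lbls (Phi : lcnf) : {fset Lbl} := \bigcup_(c <- Phi) c.2.

Definition induced (Phi : lcnf) (M : {fset Lbl}) : lcnf :=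
  [fset c in Phi | c.2 `<=` M].

Definition is_MCS (Phi : lcnf) (R : {fset Lbl}) : Prop :=
  [/\ R `<=` lbls Phi,
      satisfiable (induced Phi (lbls Phi `\` R))
    & forall l, l \in R -> ~ satisfiable (induced Phi ((lbls Phi `\` R) `|` [fset l]))].

Definition MCS (Phi : lcnf) : {fset Lbl} -> Prop := fun R => is_MCS Phi R.

Definition subsumes (c1 c2 : lclause) : bool := (c1.1 `<` c2.1) && (c1.2 `<=` c2.2).

Definition sub (Phi : lcnf) (c1 c2 : lclause) : lcnf :=
  if subsumes c1 c2 then Phi `\ c2 else Phi.
End LCNF.

(* Removing a subsumed clause C2^L2 does not change the satisfiability of any
   induced subformula Phi|_M: if C2^L2 survives the restriction to M, so does
   C1^L1 (as L1 ⊆ L2), and every assignment satisfying C1 satisfies C2 ⊇ C1.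
   The MCS conditions only query the satisfiability of induced subformulas,
   and Phi|_M depends only on M ∩ Lbls(Phi), so the MCSes coincide. *)
From HB Require Import structures.
From mathcomp Require Import all_boot finmap.
From Stdlib Require Import FunctionalExtensionality PropExtensionality.
Local Open Scope fset_scope.

Lemma fsetI_fsetDU_sub (T : choiceType) (A B R S : {fset T}) : A `<=` B ->
  ((B `\` R) `|` S) `&` A = ((A `\` R) `|` S) `&` A.
Proof.
move=> /fsubsetP AB; apply/fsetP => x; rewrite !inE.
by case xA: (x \in A); rewrite ?andbF ?andbT // (AB x xA) andbT.
Qed.

Section Induced.
Variables (V Lbl : countType).
Implicit Types (Phi Psi : lcnf V Lbl) (M N : {fset Lbl}).

Lemma sat_clause_subset (a : V -> bool) (C D : clause V) :
  C `<=` D -> sat_clause a C -> sat_clause a D.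
Proof.
move=> /fsubsetP CD /existsP[[x xC] /= ax]; apply/existsP.
by exists [` CD x xC].
Qed.

Lemma lbls_sup {Phi c} : c \in Phi -> c.2 `<=` lbls Phi.
Proof. by move=> cP; apply: (bigfcup_sup (P := xpredT)). Qed.

Lemma lbls_subset Phi Psi : Psi `<=` Phi -> lbls Psi `<=` lbls Phi.
Proof.
by move=> /fsubsetP PsiPhi; apply/bigfcupsP => c /PsiPhi cP _; apply: lbls_sup.
Qed.

Lemma induced_eq Phi M N :
  M `&` lbls Phi = N `&` lbls Phi -> induced Phi M = induced Phi N.
Proof.
move=> MN; apply/fsetP => c; rewrite !inE.
case cP: (c \in Phi) => //=.
by rewrite -[LHS]andbT -(lbls_sup cP) -fsubsetI MN fsubsetI (lbls_sup cP) andbT.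
Qed.

Lemma MCS_eq_of_equisat Phi Psi : lbls Psi `<=` lbls Phi ->
  (forall M, satisfiable (induced Phi M) <-> satisfiable (induced Psi M)) ->
  MCS Psi = MCS Phi.
Proof.
move=> PsiPhi equisat.
have restrict R S : induced Psi ((lbls Phi `\` R) `|` S)
                  = induced Psi ((lbls Psi `\` R) `|` S).
  exact/induced_eq/fsetI_fsetDU_sub.
have restrict0 R : induced Psi (lbls Phi `\` R) = induced Psi (lbls Psi `\` R).
  by have := restrict R fset0; rewrite !fsetU0.
apply: functional_extensionality => R; apply: propositional_extensionality.
split=> [[RPsi satR minR] | [RPhi satR minR]].
  split=> [||l lR]; first exact: fsubset_trans RPsi PsiPhi.
    by apply/equisat; rewrite restrict0.
  by rewrite equisat restrict; apply: minR.
have RPsi : R `<=` lbls Psi.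
  apply/fsubsetP => l lR; apply/negPn/negP => lPsi; apply: (minR l lR).
  (* [l] is not a label of Psi, so adding it does not change Psi|_M. *)
  rewrite equisat (_ : induced Psi _ = induced Psi (lbls Phi `\` R)) -?equisat //.
  apply: induced_eq; apply/fsetP => x; rewrite !inE.
  by case: (eqVneq x l) => [->|]; rewrite ?(negbTE lPsi) ?andbF ?orbF.
split=> // [|l lR]; first by rewrite -restrict0 -equisat.
by rewrite -restrict -equisat; apply: minR.
Qed.

Lemma satisfiable_induced_subsumed Phi c1 c2 M : c1 \in Phi -> subsumes c1 c2 ->
  satisfiable (induced Phi M) <-> satisfiable (induced (Phi `\ c2) M).
Proof.
move=> c1P /andP[C12 L12]; split=> [[a sat_a] | [a sat_a]].
  by exists a => c; rewrite !inE => /andP[/andP[_ cP] cM]; apply: sat_a; rewrite !inE cP.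
exists a => c; rewrite !inE => /andP[cP cM].
have [Ec|cc2] := eqVneq c c2; last by apply: sat_a; rewrite !inE cc2 cP.
rewrite Ec in cM *; apply: sat_clause_subset (fproper_sub C12) _; apply: sat_a.
have c12 : c1 != c2 by apply: contraTneq C12 => ->; rewrite fproperEneq eqxx.
by rewrite !inE c12 c1P (fsubset_trans L12).
Qed.

End Induced.

Theorem proposition3 (V Lbl : countType) (Phi : lcnf V Lbl) (c1 c2 : lclause V Lbl) :
  c1 \in Phi -> c2 \in Phi ->
  MCS (sub Phi c1 c2) = MCS Phi.
Proof.
move=> c1P _; rewrite /sub; case: ifP => // c12.
apply: MCS_eq_of_equisat; first exact/lbls_subset/fsubD1set.
by move=> M; apply: satisfiable_induced_subsumed c1P c12.
Qed.
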